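(* Let $\phi$ be an MTL sentence over the alphabet $\mathcal F^0$ of nullary fluent predicates. Let $\tau=(p_1,t_1)(p_2,t_2)\cdots$ be a finite or infinite timed trace; for each $i$ let $z^{(i)}$ be the prefix of $\tau$ consisting of the first $i$ time–action pairs and $\tau^{(i)}$ the suffix with $\tau=z^{(i)}\cdot\tau^{(i)}$. Let $w$ be a t-ESG world and $\rho$ the timed word corresponding to $(w,\tau)$. Then for each $i\in\mathbb N_0$ (with $i\le|\tau|$): $$w,z^{(i)},\tau^{(i)}\models_{\text{t-ESG}}\phi \iff \rho,i\models_{\mathrm{MTL}}\phi .$$
   Context: The logic t-ESG (relevant fragment). Action standard names $\mathcal N_A$; fluent predicate symbols, in particular nullary ones $\mathcal F^0$; primitive formulas are predicate symbols applied to standard names. Timed traces are finite or infinite sequences $t_1p_1t_2p_2\cdots$ with non-decreasing $t_i\in\mathbb R_{\ge0}$ and $p_i\in\mathcal N_A$; $(p_1,t_1)\cdots(p_k,t_k)$ denotes $t_1p_1\cdots t_kp_k$; $\mathrm{time}(z)=t_k$ for such $z$ and $\mathrm{time}(\langle\rangle)=0$. A world $w$ assigns to each primitive formula and each finite trace $z$ a truth value $w[F(\vec n),z]\in\{0,1\}$ (plus values of terms and clocks, irrelevant here). Trace formulas over $\mathcal F^0$: atoms $F\in\mathcal F^0$, $\neg\phi$, $\phi\wedge\psi$, $\phi\,\mathcal U_I\,\psi$ with $I$ an open/closed/half-closed interval with natural-number (or $\infty$) endpoints. Truth for finite $z$ and (finite or infinite) $\tau$: $w,z,\tau\models F$ iff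 $w[F,z]=1$; Boolean connectives as usual; $w,z,\tau\models\phi\,\mathcal U_I\,\psi$ iff there are a trace $\tau'$ and a nonempty finite $z_1=(p_1,t_1)\cdots(p_k,t_k)$ with $\tau=z_1\tau'$, $w,zz_1,\tau'\models\psi$, $\mathrm{time}(z_1)\in\mathrm{time}(z)+I$, and for all splits $z_1=z_2z_3$ with $z_2,z_3$ nonempty sequences of time–action pairs, $w,zz_2,z_3\tau'\models\phi$. MTL (pointwise semantics): formulas over a set $P$ of propositions: $p\in P$, $\neg\phi$, $\phi\wedge\psi$, $\phi\,\mathcal U_I\,\psi$. A timed word is a finite or infinite sequence $\rho=(\rho_0,t_0)(\rho_1,t_1)\cdots$ with $\rho_i\subseteq P$, $t_0=0$, non-decreasing $t_i\in\mathbb R_{\ge0}$. $\rho,i\models p$ iff $p\in\rho_i$; Boolean connectives usual; $\rho,i\models\phi\,\mathcal U_I\,\psi$ iff there is $j$ with $i<j<|\rho|$, $\rho,j\models\psi$, $t_j-t_i\in I$, and $\rho,m\models\phi$ for all $i<m<j$. Timed word corresponding to $(w,\tau)$: $\rho=(\rho_0,0)(\rho_1,t_1)(\rho_2,t_2)\cdots$ (same length as $\tau$ plus one) with $\rho_i=\{F(\vec n)\text{ primitive formula}\mid w[F(\vec n),z^{(i)}]=1\}$, where $z^{(i)}$ is the prefix of $\tau$ with $i$ time–action pairs. *)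

From Stdlib Require Import Reals Lra Lia List.
Import ListNotations.
Open Scope R_scope.

(** Intervals with natural-number endpoints; [i_hi = None] means +infinity
    (then the upper end is necessarily open and [i_hi_closed] is ignored). *)
Record interval := {
  i_lo : nat; i_lo_closed : bool;
  i_hi : option nat; i_hi_closed : bool }.

Definition in_int (I : interval) (x : R) : Prop :=
  (if i_lo_closed I then INR (i_lo I) <= x else INR (i_lo I) < x) /\
  match i_hi I with
  | None => True
  | Some h => if i_hi_closed I then x <= INR h else x < INR h
  end.

Inductive form (X : Type) : Type :=
| FAtom : X -> form X
| FNeg : form X -> form X
| FAnd : form X -> form X -> form X
| FUntil : interval -> form X -> form X -> form X.
Arguments FAtom {X}. Arguments FNeg {X}. Arguments FAnd {X}. Arguments FUntil {X}.

Fixpoint fmap {X Y : Type} (f : X -> Y) (phi : form X) : form Y :=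
  match phi with
  | FAtom x => FAtom (f x)
  | FNeg a => FNeg (fmap f a)
  | FAnd a b => FAnd (fmap f a) (fmap f b)
  | FUntil J a b => FUntil J (fmap f a) (fmap f b)
  end.

Definition ftrace (A : Type) := list (A * R).

Definition time {A : Type} (z : ftrace A) : R :=
  match rev z with [] => 0 | (_, t) :: _ => t end.

(** Finite or infinite traces: [tlen = Some n] (n pairs) or [None] (infinite);
    [tev k] is the (k+1)-th pair (p_{k+1}, t_{k+1}). *)
Record trace (A : Type) := { tlen : option nat; tev : nat -> A * R }.
Arguments tlen {A}. Arguments tev {A}.

Definition le_len {A : Type} (k : nat) (tau : trace A) : Prop :=
  match tlen tau with None => True | Some n => (k <= n)%nat end.

Definition take_tr {A : Type} (k : nat) (tau : trace A) : ftrace A :=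
  map (tev tau) (seq 0 k).

Definition drop_tr {A : Type} (k : nat) (tau : trace A) : trace A :=
  {| tlen := option_map (fun n => (n - k)%nat) (tlen tau);
     tev := fun j => tev tau (k + j)%nat |}.

Definition timed_trace {A : Type} (tau : trace A) : Prop :=
  (forall k, le_len (S k) tau -> 0 <= snd (tev tau k)) /\
  (forall k, le_len (S (S k)) tau -> snd (tev tau k) <= snd (tev tau (S k))).

(** t-ESG worlds (only the truth values of primitive formulas matter here):
    [w p z] = w[p, z] for a primitive formula p and a finite trace z. *)
Definition world (A Prim : Type) := Prim -> ftrace A -> bool.

(** t-ESG semantics of trace formulas over nullary fluents F0;
    [emb F] is the primitive formula F(). *)
Fixpoint tsat {A F0 Prim : Type} (emb : F0 -> Prim) (w : world A Prim)
  (phi : form F0) (z : ftrace A) (tau : trace A) : Prop :=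
  match phi with
  | FAtom F => w (emb F) z = true
  | FNeg a => ~ tsat emb w a z tau
  | FAnd a b => tsat emb w a z tau /\ tsat emb w b z tau
  | FUntil J a b =>
      (* tau = z1 tau' with z1 = take_tr k tau nonempty, tau' = drop_tr k tau *)
      exists k, (1 <= k)%nat /\ le_len k tau /\
        tsat emb w b (z ++ take_tr k tau) (drop_tr k tau) /\
        in_int J (time (take_tr k tau) - time z) /\
        (* all splits z1 = z2 z3, z2 = first m pairs, z2,z3 nonempty *)
        (forall m, (1 <= m)%nat -> (m < k)%nat ->
           tsat emb w a (z ++ take_tr m tau) (drop_tr m tau))
  end.

(** Timed words: length [wlen] (None = infinite); [wev j] = (rho_j, t_j),
    with rho_j a set of propositions given by its characteristic function. *)
Record tword (P : Type) := { wlen : option nat; wev : nat -> (P -> bool) * R }.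
Arguments wlen {P}. Arguments wev {P}.

Definition lt_wlen {P : Type} (j : nat) (rho : tword P) : Prop :=
  match wlen rho with None => True | Some n => (j < n)%nat end.

Fixpoint msat {P : Type} (rho : tword P) (phi : form P) (i : nat) : Prop :=
  match phi with
  | FAtom p => fst (wev rho i) p = true
  | FNeg a => ~ msat rho a i
  | FAnd a b => msat rho a i /\ msat rho b i
  | FUntil J a b =>
      exists j, (i < j)%nat /\ lt_wlen j rho /\ msat rho b j /\
        in_int J (snd (wev rho j) - snd (wev rho i)) /\
        (forall m, (i < m)%nat -> (m < j)%nat -> msat rho a m)
  end.

(** timed word corresponding to (w, tau): length |tau|+1,
    rho_i = { primitive formulas p | w[p, z^(i)] = 1 }, t_0 = 0, t_i = time of i-th pair *)
Definition corr_word {A Prim : Type} (w : world A Prim) (tau : trace A) : tword Prim :=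
  {| wlen := option_map S (tlen tau);
     wev := fun i => (fun p => w p (take_tr i tau),
                      match i with O => 0 | S k => snd (tev tau k) end) |}.

(** Proof idea: under the correspondence, the t-ESG configuration (z^(i), tau^(i))
    is position i of the timed word, and an until-witness of k time-action pairs
    in the suffix tau^(i) is the MTL witness j = i + k.  Since the time of a
    nonempty prefix is the time stamp of its last pair, the interval constraints
    agree as well, and a structural induction on the formula concludes. *)
From Stdlib Require Import Reals List.
From Stdlib Require Import Lia FunctionalExtensionality.
Import ListNotations.

Section Traces.

Context {A : Type}.
Implicit Types (tau : trace A) (i k : nat).

Lemma take_tr_S tau k : take_tr (S k) tau = take_tr k tau ++ [tev tau k].
Proof. unfold take_tr. now rewrite seq_S, map_app. Qed.

Lemma take_tr_add tau i k :
  take_tr i tau ++ take_tr k (drop_tr i tau) = take_tr (i + k) tau.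
Proof.
  induction k as [|k IHk].
  - now rewrite app_nil_r, Nat.add_0_r.
  - rewrite Nat.add_succ_r, !take_tr_S, app_assoc, IHk. reflexivity.
Qed.

Lemma drop_tr_add tau i k : drop_tr k (drop_tr i tau) = drop_tr (i + k) tau.
Proof.
  unfold drop_tr; simpl; f_equal.
  - destruct (tlen tau); simpl; f_equal; lia.
  - apply functional_extensionality; intro j; f_equal; lia.
Qed.

Lemma time_take_tr tau i :
  time (take_tr i tau) = match i with O => 0%R | S k => snd (tev tau k) end.
Proof.
  destruct i as [|k]; [reflexivity|].
  unfold time; rewrite take_tr_S, rev_app_distr; simpl.
  now destruct (tev tau k).
Qed.

Lemma le_len_le tau i k : (k <= i)%nat -> le_len i tau -> le_len k tau.
Proof. unfold le_len; destruct (tlen tau); lia. Qed.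

Lemma le_len_drop_tr tau i k :
  le_len i tau -> le_len k (drop_tr i tau) <-> le_len (i + k) tau.
Proof. unfold le_len, drop_tr; simpl; destruct (tlen tau); simpl; lia. Qed.

Lemma lt_wlen_corr_word {Prim : Type} (w : world A Prim) tau j :
  lt_wlen j (corr_word w tau) <-> le_len j tau.
Proof. unfold lt_wlen, le_len; simpl; destruct (tlen tau); simpl; lia. Qed.

End Traces.

Section Correspondence.

Context {A F0 Prim : Type} (emb : F0 -> Prim) (w : world A Prim) (tau : trace A).

Definition semantics_agree (phi : form F0) : Prop :=
  forall i, le_len i tau ->
    tsat emb w phi (take_tr i tau) (drop_tr i tau) <->
    msat (corr_word w tau) (fmap emb phi) i.

Lemma semantics_agree_until J a b :
  semantics_agree a -> semantics_agree b -> semantics_agree (FUntil J a b).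
Proof.
  unfold semantics_agree; intros IHa IHb i Hi; simpl.
  split.
  - intros ([|k] & Hk & Hlen & Hb & HJ & Ha); [lia|].
    apply le_len_drop_tr in Hlen; [|exact Hi].
    rewrite take_tr_add, drop_tr_add, IHb in Hb by exact Hlen.
    exists (i + S k)%nat; split; [lia|].
    split; [now apply lt_wlen_corr_word|].
    split; [exact Hb|].
    split.
    + rewrite !time_take_tr in HJ; simpl in HJ |- *.
      now rewrite Nat.add_succ_r.
    + intros m Hm1 Hm2.
      replace m with (i + (m - i))%nat by lia.
      specialize (Ha (m - i)%nat ltac:(lia) ltac:(lia)).
      rewrite take_tr_add, drop_tr_add, IHa in Ha; [exact Ha|].
      apply le_len_le with (i + S k)%nat; [lia | exact Hlen].
  - intros (j & Hij & Hlen & Hb & HJ & Ha).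
    assert (Hj : exists k, j = (i + S k)%nat) by (exists (j - S i)%nat; lia).
    destruct Hj as (k & ->).
    apply lt_wlen_corr_word in Hlen.
    exists (S k); split; [lia|].
    split; [apply le_len_drop_tr; assumption|].
    split; [now rewrite take_tr_add, drop_tr_add, IHb|].
    split.
    + rewrite !time_take_tr; simpl in HJ |- *.
      now rewrite Nat.add_succ_r in HJ.
    + intros m Hm1 Hm2.
      rewrite take_tr_add, drop_tr_add, IHa; [apply Ha; lia|].
      apply le_len_le with (i + S k)%nat; [lia | exact Hlen].
Qed.

Lemma semantics_agree_all (phi : form F0) : semantics_agree phi.
Proof.
  induction phi as [F|a IHa|a IHa b IHb|J a IHa b IHb].
  - intros i _; reflexivity.
  - intros i Hi; simpl; now rewrite (IHa i Hi).
  - intros i Hi; simpl; now rewrite (IHa i Hi), (IHb i Hi).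
  - now apply semantics_agree_until.
Qed.

End Correspondence.

Theorem mainTheorem9 (A F0 Prim : Type) (emb : F0 -> Prim)
  (w : world A Prim) (phi : form F0) (tau : trace A) (i : nat) :
  timed_trace tau -> le_len i tau ->
  (tsat emb w phi (take_tr i tau) (drop_tr i tau) <->
   msat (corr_word w tau) (fmap emb phi) i).
Proof. intros _; apply semantics_agree_all. Qed.
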